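(* Let $b\ge 2$, $s,m\in\mathbb{N}$, let $C_1,\dots,C_s\in\mathbb{Z}_b^{\mathbb{N}\times m}$ and let $\mathcal{P}\subset G^s$ be the digital net with generating matrices $C_1,\dots,C_s$. Let $\mathcal{P}_{\Phi_b}:=\{\Phi_b(\boldsymbol z):\boldsymbol z\in\mathcal{P}\}$ be its folded digital net. Then $\mathcal{P}_{\Phi_b}$ is again a digital net in $G^s$, and its dual net satisfies $$\mathcal{P}_{\Phi_b}^{\perp}=\{\lfloor \boldsymbol k/b\rfloor:\ \boldsymbol k\in \mathcal{E}_0^s\cap \mathcal{P}^{\perp}\},$$ where $\lfloor \boldsymbol k/b\rfloor=(\lfloor k_1/b\rfloor,\dots,\lfloor k_s/b\rfloor)$ for $\boldsymbol k=(k_1,\dots,k_s)$.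
   Context: $b\ge 2$ is an integer, $\mathbb{Z}_b=\{0,\dots,b-1\}$ with addition mod $b$, and $G:=\prod_{i=1}^\infty\mathbb{Z}_b$ (infinite sequences $(\zeta_1,\zeta_2,\dots)^\top$ with coordinatewise addition mod $b$). A digital net in $G^s$ with generating matrices $C_1,\dots,C_s\in\mathbb{Z}_b^{\mathbb{N}\times m}$ (infinite-row matrices with $m$ columns; columns may have infinitely many nonzero entries) is $\mathcal{P}=\{\boldsymbol z_0,\dots,\boldsymbol z_{b^m-1}\}$, where for $0\le h<b^m$ with $b$-adic expansion $h=\sum_{i=0}^{m-1}\eta_ib^i$, $\boldsymbol z_h=(z_{h,1},\dots,z_{h,s})$ with $z_{h,j}=C_j(\eta_0,\dots,\eta_{m-1})^\top\in G$ (arithmetic mod $b$). Its dual net is $\mathcal{P}^\perp=\{\boldsymbol k\in\mathbb{N}_0^s: C_1^\top\vec k_1+\dots+C_s^\top\vec k_s=\boldsymbol 0\in\mathbb{Z}_b^m\}$, where for $k_j=\kappa_{0,j}+\kappa_{1,j}b+\cdots$ (finite $b$-adic expansion) $\vec k_j=(\kappa_{0,j},\kappa_{1,j},\dots)^\top$. The $b$-adic tent transformation $\Phi_b:G\to G$ is $\Phi_b((\zeta_1,\zeta_2,\dots)^\top)=(\eta_1,\eta_2,\dots)^\top$ with $\eta_i=\zeta_{i+1}-\zeta_1 \pmod b$, applied coordinatewise on $G^s$. For $k\in\mathbb{N}$ with $b$-adic digits $\kappa_0,\kappa_1,\dots$, $\delta(k)=\kappa_0+\kappa_1+\cdots$;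 $\mathcal{E}:=\{k\in\mathbb{N}:\delta(k)\equiv 0\pmod b\}$ and $\mathcal{E}_0:=\mathcal{E}\cup\{0\}$. *)

From mathcomp Require Import all_boot all_algebra.
Set Implicit Arguments. Unset Strict Implicit. Unset Printing Implicit Defensive.
Import GRing.Theory.
Local Open Scope ring_scope.

(* G = prod_{i>=1} Z_b, represented 0-based: z i = zeta_{i+1}. *)
Definition G (b : nat) := nat -> 'Z_b.

Definition digit (b i n : nat) : nat := (n %/ b ^ i %% b)%N.

Definition genmats (b s m : nat) := 'I_s -> nat -> 'I_m -> 'Z_b.

Definition net_point (b s m : nat) (C : genmats b s m) (h : nat) (j : 'I_s)
  : G b := fun i => \sum_(c < m) C j i c * (digit b c h)%:R.

Definition tent (b : nat) (z : G b) : G b := fun i => z i.+1 - z 0%N.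

(* dual net: C_1^T k_1 + ... + C_s^T k_s = 0 in Z_b^m.
   The digits of k with index i >= k vanish, so the sum over i < k is the
   full (finite) b-adic expansion. *)
Definition in_dual (b s m : nat) (C : genmats b s m) (k : 'I_s -> nat) : Prop :=
  forall c : 'I_m,
    \sum_(j < s) \sum_(i < k j) C j i c * (digit b i (k j))%:R = 0.

Definition digsum (b k : nat) : nat := (\sum_(i < k) digit b i k)%N.

Definition inE (b k : nat) : Prop := (0 < k)%N /\ (digsum b k %% b = 0)%N.
Definition inE0 (b k : nat) : Prop := inE b k \/ k = 0%N.

From mathcomp Require Import all_boot all_algebra.
Import GRing.Theory.
Local Open Scope ring_scope.

(* Removing the first digit of k (k ↦ ⌊k/b⌋) shifts the remaining digits down by
   one place.  Hence, writing f for a row-indexed column of C_j, the pairing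
   Σ_i f_i κ_i splits as f_0 κ_0 + Σ_i f_{i+1} κ_{i+1}, and in terms of the
   folded column f_{i+1} - f_0 this reads
     Σ_i f_i κ_i(k) = Σ_i (f_{i+1} - f_0) κ_i(⌊k/b⌋) + f_0 δ(k).
   So the folded net is the digital net of the folded matrices, and on indices
   with δ(k) ≡ 0 (mod b) duality for C at k is duality for the folded matrices
   at ⌊k/b⌋.  Every k' arises as ⌊k/b⌋ for such a k, by appending a suitable
   last digit to k'. *)

Lemma digit_small (b i k : nat) : (1 < b)%N -> (k <= i)%N -> digit b i k = 0%N.
Proof.
move=> b_gt1 le_ki; rewrite /digit divn_small ?mod0n //.
exact: leq_ltn_trans le_ki (ltn_expl i b_gt1).
Qed.

Lemma digit0 (b k : nat) : digit b 0 k = (k %% b)%N.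
Proof. by rewrite /digit expn0 divn1. Qed.

Lemma digitS (b i k : nat) : digit b i.+1 k = digit b i (k %/ b).
Proof. by rewrite /digit expnS divnMA. Qed.

Section DigitSums.
Variables (V : nmodType) (b : nat).
Hypothesis b_gt1 : (1 < b)%N.

Lemma sum_digits_widen (g : nat -> nat -> V) (k n : nat) :
  (forall i, g i 0%N = 0) -> (k <= n)%N ->
  \sum_(i < n) g i (digit b i k) = \sum_(i < k) g i (digit b i k).
Proof.
move=> g_digit0 le_kn; rewrite -!(big_mkord xpredT (fun i => g i (digit b i k))).
rewrite (@big_cat_nat _ _ _ k 0 n _ _ (leq0n k) le_kn) /= [X in _ + X]big1_seq ?addr0 //.
move=> i /andP[_]; rewrite mem_index_iota => /andP[le_ki _].
by rewrite digit_small.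
Qed.

Lemma sum_digits_divn (g : nat -> nat -> V) (k : nat) :
  (forall i, g i 0%N = 0) ->
  \sum_(i < k) g i (digit b i k) =
  g 0%N (k %% b)%N + \sum_(i < k %/ b) g i.+1 (digit b i (k %/ b)).
Proof.
move=> g_digit0; rewrite -(@sum_digits_widen g k k.+1 g_digit0 (leqnSn k)).
rewrite big_ord_recl /= digit0; congr (_ + _).
under eq_bigr do rewrite /bump /= add1n digitS.
exact: (@sum_digits_widen (fun i => g i.+1) _ _ (fun i => g_digit0 i.+1) (leq_div k b)).
Qed.

End DigitSums.

Lemma digsum0 (b : nat) : digsum b 0 = 0%N.
Proof. by rewrite /digsum big_ord0. Qed.

Lemma digsum_divn (b k : nat) : (1 < b)%N ->
  digsum b k = (k %% b + digsum b (k %/ b))%N.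
Proof. by move=> b_gt1; apply: (@sum_digits_divn nat b b_gt1 (fun _ d => d)). Qed.

Lemma inE0_digsum (b k : nat) : inE0 b k <-> (digsum b k %% b = 0)%N.
Proof.
split=> [[[_ //] | ->] | digsum_b]; first by rewrite digsum0 mod0n.
by case: (posnP k) => [->|k_gt0]; [right | left].
Qed.

(* The last digit to append to k so that the digit sum becomes divisible by b. *)
Definition digsum_complement (b k : nat) : nat := ((b - digsum b k %% b) %% b)%N.

Section DigitAppend.
Variables (b k : nat).
Hypothesis b_gt1 : (1 < b)%N.
Let r := digsum_complement b k.

Lemma digsum_complement_lt : (r < b)%N.
Proof. by rewrite ltn_mod ltnW. Qed.

Lemma divn_append_digit : ((k * b + r) %/ b = k)%N.
Proof. by rewrite divnMDl ?(ltnW b_gt1) // divn_small ?addn0 ?digsum_complement_lt. Qed.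

Lemma digsum_append_complement : (digsum b (k * b + r) %% b = 0)%N.
Proof.
rewrite digsum_divn // divn_append_digit modnMDl (modn_small digsum_complement_lt).
have lt_mod : (digsum b k %% b < b)%N by rewrite ltn_mod ltnW.
by rewrite /r /digsum_complement modnDml -modnDmr subnK ?modnn // ltnW.
Qed.

End DigitAppend.

(* [digit_pair f k] is the entry Σ_i f_i κ_i of C_j^T k_j for a column f of C_j. *)
Definition digit_pair {R : pzRingType} (b : nat) (f : nat -> R) (k : nat) : R :=
  \sum_(i < k) f i * (digit b i k)%:R.

Section DigitPair.
Variables (R : pzRingType) (b : nat).
Hypothesis b_gt1 : (1 < b)%N.

Lemma digit_pair_divn (f : nat -> R) (k : nat) :
  digit_pair b f k = f 0%N * (k %% b)%:R + digit_pair b (fun i => f i.+1) (k %/ b).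
Proof. by apply: (@sum_digits_divn R b b_gt1 (fun i d => f i * d%:R)) => i; rewrite mulr0. Qed.

Lemma digit_pair_fold (f : nat -> R) (k : nat) :
  digit_pair b f k =
  digit_pair b (fun i => f i.+1 - f 0%N) (k %/ b) + f 0%N * (digsum b k)%:R.
Proof.
have fold_pair : digit_pair b (fun i => f i.+1 - f 0%N) (k %/ b) =
    digit_pair b (fun i => f i.+1) (k %/ b) - f 0%N * (digsum b (k %/ b))%:R.
  rewrite /digit_pair /digsum natr_sum mulr_sumr -sumrB.
  by apply: eq_bigr => i _; rewrite mulrBl.
rewrite digit_pair_divn fold_pair (@digsum_divn b k b_gt1) natrD mulrDr.
by rewrite addrCA subrK.
Qed.

End DigitPair.

Definition fold_mats {b s m : nat} (C : genmats b s m) : genmats b s m :=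
  fun j i c => C j i.+1 c - C j 0%N c.

Lemma tent_net_point (b s m : nat) (C : genmats b s m) (h : nat) (j : 'I_s) (i : nat) :
  tent (net_point C h j) i = net_point (fold_mats C) h j i.
Proof. by rewrite /tent /net_point -sumrB; apply: eq_bigr => c _; rewrite mulrBl. Qed.

Lemma in_dual_fold_mats {b s m : nat} (C : genmats b s m) {k k' : 'I_s -> nat} :
  (1 < b)%N -> (forall j, digsum b (k' j) %% b = 0)%N ->
  (forall j, k j = (k' j %/ b)%N) ->
  in_dual (fold_mats C) k <-> in_dual C k'.
Proof.
move=> b_gt1 digsum_k' def_k.
suff eq_pair : forall (j : 'I_s) (c : 'I_m), digit_pair b (fun i => C j i c) (k' j) =
    digit_pair b (fun i => fold_mats C j i c) (k j).
  by split=> dual c; rewrite -[RHS](dual c); apply: eq_bigr => j _;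
    [exact: eq_pair | symmetry; exact: eq_pair].
move=> j c; rewrite digit_pair_fold // -Zp_nat_mod // digsum_k' mulr0 addr0.
by rewrite def_k.
Qed.

Theorem lemma3p3 (b s m : nat) (hb : (1 < b)%N) (C : genmats b s m) :
  exists D : genmats b s m,
    (forall h : nat, (h < b ^ m)%N ->
       forall (j : 'I_s) (i : nat),
         tent (net_point C h j) i = net_point D h j i) /\
    (forall k : 'I_s -> nat,
       in_dual D k <->
       exists k' : 'I_s -> nat,
         (forall j, inE0 b (k' j)) /\ in_dual C k' /\
         (forall j, k j = (k' j %/ b)%N)).
Proof.
exists (fold_mats C); split=> [h _ j i | k]; first exact: tent_net_point.
split=> [dual_k | [k' [E0_k' [dual_k' def_k]]]].
- pose k' j := (k j * b + digsum_complement b (k j))%N.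
  have digsum_k' j : (digsum b (k' j) %% b = 0)%N by exact: digsum_append_complement.
  have def_k j : k j = (k' j %/ b)%N by rewrite divn_append_digit.
  exists k'; split; first by move=> j; apply/inE0_digsum.
  by split=> //; exact: (in_dual_fold_mats C hb digsum_k' def_k).1 dual_k.
- have digsum_k' j : (digsum b (k' j) %% b = 0)%N by apply/inE0_digsum.
  exact: (in_dual_fold_mats C hb digsum_k' def_k).2 dual_k'.
Qed.
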